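(* Let $S_{\text{thirds}}=(1,\mathbb{R}^{+},\{-\tfrac13,0,\tfrac13\},f_{\text{add}},\{\bot\}\cup\mathbb{Z}^{+},h_{\text{sqz}},x_0=0)$ and $\widehat{S}_{\text{binary}}=(1,\mathbb{R}^{+},\{\pm\tfrac{1}{2^p}\mid p\in\mathbb{Z}\},f_{\text{add}},\{\bot\}\cup\mathbb{Z}^{+},h_{\text{sqz}},\widehat{x}_0=0)$, where $f_{\text{add}}(x,u)=x+u$ and $$h_{\text{sqz}}(x)=\begin{cases} q & \text{if there is } q\in\mathbb{Z}^{+} \text{ with } -\frac{1}{4\cdot 2^q}\le x-\frac{q}{3}\le\frac{1}{4\cdot 2^q},\\ \bot & \text{otherwise.}\end{cases}$$ For any $1$-illusion of $S_{\text{thirds}}$ by $\widehat{S}_{\text{binary}}$, with witness time-scaling function $z$, and any finite $T$, when the robot in $S_{\text{thirds}}$ follows the constant policy $u_k=\tfrac13$, there exists $N_T>0$ such that $$T<\max_{k\in\{1,\dots,N_T\}}\{z(k+1)-z(k)\}.$$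
   Context: A deterministic multi-robot transition system is a 7-tuple $(n,X,U,f,Y,h,x_0)$: $n$ robots, product state space $X$, product action space $U$, transition function $f:X\times U\to X$ (componentwise per robot), product observation space $Y$, observation function $h:X\to Y$ (componentwise per robot, $h^{(i)}$), initial state $x_0$; it evolves by $x_{k+1}=f(x_k,u_k)$, $y_k=h(x_k)$. Here both systems have a single robot. When a primary system $\widehat{S}$ (hatted quantities) emulates a secondary system $S$, a robot policy $\widehat{\pi}^{(i)}$ for robot $i$ of $\widehat{S}$ maps its own action history $\widehat{u}^{(i)}_0,\dots,\widehat{u}^{(i)}_k$, its observation history $\widehat{y}^{(i)}_0,\dots,\widehat{y}^{(i)}_k$, and the state history $x_0,\dots,x_\ell$ of the secondary system (with $\ell$ possibly different from $k$) to an action $\widehat{u}^{(i)}_k$. Robot policies in $S$ choose actions from histories in the same manner. $\widehat{S}$ is an $m$-illusion of $S$ (with $0<m\le n$) if there exist (i) robot policies $\widehat{\pi}^{(1)},\dots,\widehat{\pi}^{(\widehat{n})}$ in $\widehat{S}$, (ii) a strictly increasing function $z:\mathbb{Z}^+\to\mathbb{Z}^+$, and (iii) functions $\rho_k:\{1,\dots,m\}\to\{1,\dots,\widehat{n}\}$, such that for any robot policies $\pi^{(1)},\dots,\pi^{(n)}$ in $S$, for all $k\ge0$ and $1\le i\le m$, $h^{(i)}(x_k)=\widehat{h}^{(\rho_k(i))}(\widehat{x}_{z(k)})$, where $x$ and $\widehat{x}$ are the state trajectories of $S$ and $\widehat{S}$. A tuple $(\widehat{\pi},(\rho_k),z)$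 satisfying this is a witness to the illusion. *)

From Stdlib Require Import Reals Lra Lia List ZArith ClassicalEpsilon.
Import ListNotations.
Open Scope R_scope.

(** Observation space {bot} ∪ Z^+ : [None] is bot, [Some q] is q (q >= 1). *)
Definition Obs := option nat.

Definition sqz_cond (x : R) (q : nat) : Prop :=
  (1 <= q)%nat /\
  - (1 / (4 * 2 ^ q)) <= x - INR q / 3 <= 1 / (4 * 2 ^ q).

(** h_sqz : returns q if such a q in Z^+ exists, bot otherwise
    (such a q is unique since the intervals are disjoint). *)
Definition h_sqz (x : R) : Obs :=
  match excluded_middle_informative (exists q : nat, sqz_cond x q) with
  | left H => Some (proj1_sig (constructive_indefinite_description _ H))
  | right _ => None
  end.

Definition f_add (x u : R) : R := x + u.

Definition thirds_action (u : R) : Prop := u = - (1/3) \/ u = 0 \/ u = 1/3.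

Definition binary_action (u : R) : Prop :=
  exists p : Z, u = / powerRZ 2 p \/ u = - / powerRZ 2 p.

(** Policies of the (single) robot of the secondary system S_thirds:
    from own past action history u_0..u_{k-1} and observation history
    y_0..y_k to the action u_k. *)
Definition sec_policy := list R -> list Obs -> R.

Definition valid_sec_policy (pi : sec_policy) : Prop :=
  forall us ys, thirds_action (pi us ys).

(** Secondary run: (states x_0..x_k, actions u_0..u_{k-1}), x_0 = 0. *)
Fixpoint sec_run (pi : sec_policy) (k : nat) : list R * list R :=
  match k with
  | O => ([0], [])
  | S k' =>
      let (st, ac) := sec_run pi k' in
      let u := pi ac (map h_sqz st) in
      (st ++ [f_add (last st 0) u], ac ++ [u])
  end.

Definition sec_traj (pi : sec_policy) (k : nat) : R := last (fst (sec_run pi k)) 0.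

(** Policies of the (single) robot of the primary system S^_binary:
    from own past action history, observation history y^_0..y^_j and the
    state history x_0..x_l of the secondary system, to the action u^_j. *)
Definition prim_policy := list R -> list Obs -> list R -> R.

Definition valid_prim_policy (pih : prim_policy) : Prop :=
  forall us ys xs, binary_action (pih us ys xs).

Definition prefix (x : nat -> R) (n : nat) : list R := map x (seq 0 (S n)).

(** Primary run driven by the secondary trajectory [x]; at primary step j the
    policy sees the secondary state history x_0..x_(ell j). *)
Fixpoint prim_run (pih : prim_policy) (ell : nat -> nat) (x : nat -> R) (j : nat)
  : list R * list R :=
  match j with
  | O => ([0], [])
  | S j' =>
      let (st, ac) := prim_run pih ell x j' in
      let u := pih ac (map h_sqz st) (prefix x (ell j')) in
      (st ++ [f_add (last st 0) u], ac ++ [u])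
  end.

Definition prim_traj (pih : prim_policy) (ell : nat -> nat) (x : nat -> R) (j : nat) : R :=
  last (fst (prim_run pih ell x j)) 0.

Definition strictly_increasing (z : nat -> nat) : Prop :=
  forall a b, (a < b)%nat -> (z a < z b)%nat.

(** Witness of a 1-illusion of S_thirds by S^_binary (n = n^ = m = 1, so
    rho_k is necessarily the identity on {1}).  [ell] fixes which secondary
    state history x_0..x_(ell j) the primary policy sees at its step j. *)
Definition illusion_witness (pih : prim_policy) (ell : nat -> nat) (z : nat -> nat) : Prop :=
  valid_prim_policy pih /\ strictly_increasing z /\
  forall pi : sec_policy, valid_sec_policy pi ->
    forall k : nat,
      h_sqz (sec_traj pi k) = h_sqz (prim_traj pih ell (sec_traj pi) (z k)).

Definition max_gap (z : nat -> nat) (N : nat) : nat :=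
  fold_right Nat.max 0%nat (map (fun k => (z (S k) - z k)%nat) (seq 1 N)).

Definition const_third : sec_policy := fun _ _ => 1/3.

(** Every binary action [± 1/2^p] is, at each scale [2^-K], either a multiple
    of [2^-K] or smaller than [2^-(K+1)]. Hence a sum of at most [n] binary
    actions stays at distance at least [1/(3 * 4^n)] from [1/3]: if all terms
    are multiples of [2^-2n], so is the sum, and [1/3] is not dyadic; otherwise
    one term is tiny and can be dropped. If the gaps of [z] were bounded by [M],
    the primary robot would have to cover the displacement between the
    observation windows around [k/3] and [(k+1)/3] in at most [M] steps, and for
    [k = 2M + 1] these windows are narrower than [1/(3 * 4^M)]. *)

From Stdlib Require Import Reals List.
From Stdlib Require Import Lra Lia ZArith Classical ClassicalEpsilon.
Import ListNotations.
Open Scope R_scope.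

Definition sumR (l : list R) : R := fold_right Rplus 0 l.

Lemma sumR_app l1 l2 : sumR (l1 ++ l2) = sumR l1 + sumR l2.
Proof. induction l1 as [|a l1 IH]; simpl; [|unfold sumR in *; simpl; rewrite IH]; lra. Qed.

Lemma sumR_insert l1 t l2 : sumR (l1 ++ t :: l2) = t + sumR (l1 ++ l2).
Proof. rewrite !sumR_app. unfold sumR; simpl. ring. Qed.

Lemma pow2_pos m : 0 < 2 ^ m.
Proof. apply pow_lt. lra. Qed.

Definition dyadic_at (K : nat) (u : R) : Prop := exists N : Z, u * 2 ^ K = IZR N.

Definition dyadic_or_small (u : R) : Prop :=
  forall K : nat, dyadic_at K u \/ Rabs u <= / 2 ^ S K.

Lemma dyadic_at_pow2 K m : dyadic_at K (2 ^ m).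
Proof. exists (2 ^ Z.of_nat (m + K))%Z. rewrite <- pow_IZR, pow_add. reflexivity. Qed.

Lemma dyadic_or_small_opp u : dyadic_or_small u -> dyadic_or_small (- u).
Proof.
  intros H K. destruct (H K) as [[N HN]|HN].
  - left. exists (- N)%Z. rewrite opp_IZR, <- HN. ring.
  - right. rewrite Rabs_Ropp. exact HN.
Qed.

Lemma dyadic_or_small_inv_pow2 p : dyadic_or_small (/ powerRZ 2 p).
Proof.
  intros K. destruct p as [|a|a]; simpl.
  - left. rewrite Rinv_1. apply (dyadic_at_pow2 K 0).
  - destruct (le_lt_dec (Pos.to_nat a) K) as [Ha|Ha].
    + left. destruct (dyadic_at_pow2 0 (K - Pos.to_nat a)) as [N HN]. exists N.
      rewrite <- HN. replace K with (K - Pos.to_nat a + Pos.to_nat a)%nat at 1 by lia.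
      rewrite pow_add. field. apply Rgt_not_eq, pow2_pos.
    + right. rewrite Rabs_pos_eq by (apply Rlt_le, Rinv_0_lt_compat, pow2_pos).
      apply Rinv_le_contravar; [apply (pow2_pos (S K)) | apply (Rle_pow 2 (S K)); [lra|lia]].
  - left. rewrite Rinv_inv. apply dyadic_at_pow2.
Qed.

Lemma binary_action_dyadic_or_small u : binary_action u -> dyadic_or_small u.
Proof.
  intros [p [-> | ->]];
    [|apply dyadic_or_small_opp]; apply dyadic_or_small_inv_pow2.
Qed.

Lemma dyadic_at_sumR K l : Forall (dyadic_at K) l -> dyadic_at K (sumR l).
Proof.
  induction 1 as [|a l [N1 H1] _ [N2 H2]].
  - exists 0%Z. unfold sumR; simpl. ring.
  - exists (N1 + N2)%Z. rewrite plus_IZR, <- H1, <- H2. unfold sumR; simpl. ring.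
Qed.

Lemma pow2_mod3 K : exists m, (2 ^ K = 3 * m + 1 \/ 2 ^ K = 3 * m + 2)%nat.
Proof.
  induction K as [|K [m [Hm|Hm]]].
  - exists 0%nat. simpl. lia.
  - exists (2 * m)%nat. rewrite Nat.pow_succ_r'. lia.
  - exists (2 * m + 1)%nat. rewrite Nat.pow_succ_r'. lia.
Qed.

Lemma dyadic_at_far_third K x : dyadic_at K x -> / (3 * 2 ^ K) <= Rabs (x - 1/3).
Proof.
  intros [N HN]. destruct (pow2_mod3 K) as [m Hm].
  pose proof (pow2_pos K) as HP.
  set (d := (3 * N - Z.of_nat (2 ^ K))%Z).
  assert (Hd : 1 <= Rabs (IZR d)) by (rewrite <- abs_IZR; apply IZR_le; unfold d; lia).
  assert (Ed : IZR d = 3 * (x * 2 ^ K) - 2 ^ K).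
  { unfold d. rewrite minus_IZR, mult_IZR, <- INR_IZR_INZ, pow_INR, HN.
    simpl (INR 2). replace (1 + 1) with 2 by ring. ring. }
  replace (x - 1/3) with (IZR d * / (3 * 2 ^ K)) by (rewrite Ed; field; lra).
  rewrite Rabs_mult, (Rabs_pos_eq (/ _)) by (apply Rlt_le, Rinv_0_lt_compat; lra).
  assert (0 < / (3 * 2 ^ K)) by (apply Rinv_0_lt_compat; lra).
  nra.
Qed.

Lemma not_Forall_exists {A} (P : A -> Prop) l :
  ~ Forall P l -> exists l1 t l2, l = l1 ++ t :: l2 /\ ~ P t.
Proof.
  rewrite Forall_forall. intros H.
  destruct (not_all_ex_not _ _ H) as [t Ht]. apply imply_to_and in Ht as [Hin Ht].
  destruct (in_split _ _ Hin) as (l1 & l2 & ->). eauto.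
Qed.

Lemma sumR_far_third n l :
  (length l <= n)%nat -> Forall dyadic_or_small l ->
  / (3 * 2 ^ (2 * n)) <= Rabs (sumR l - 1/3).
Proof.
  revert l. induction n as [|n IH]; intros l Hlen Hl.
  - destruct l; [|simpl in Hlen; lia]. unfold sumR; simpl.
    rewrite Rabs_left; lra.
  - destruct (classic (Forall (dyadic_at (2 * S n)) l)) as [Hdy|Hdy].
    + apply dyadic_at_far_third, dyadic_at_sumR, Hdy.
    + destruct (not_Forall_exists _ _ Hdy) as (l1 & t & l2 & -> & Ht).
      assert (Hsmall : Rabs t <= / 2 ^ S (2 * S n)).
      { destruct (Forall_elt _ _ _ Hl (2 * S n)%nat); tauto. }
      assert (Hrest : / (3 * 2 ^ (2 * n)) <= Rabs (sumR (l1 ++ l2) - 1/3)).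
      { apply IH.
        - rewrite length_app in *. simpl in Hlen. lia.
        - apply Forall_app in Hl as [H1 H2]. apply Forall_app.
          split; [exact H1 | exact (Forall_inv_tail H2)]. }
      pose proof (Rabs_triang_inv (sumR (l1 ++ l2) - 1/3) (- t)) as Htri.
      rewrite Rabs_Ropp in Htri. rewrite sumR_insert.
      replace (2 * S n)%nat with (S (S (2 * n))) in * by lia.
      set (m := (2 * n)%nat) in *.
      pose proof (pow2_pos m). simpl pow in *.
      set (e := / 2 ^ m) in *.
      assert (0 < e) by (apply Rinv_0_lt_compat; lra).
      replace (/ (2 * (2 * (2 * 2 ^ m)))) with (/8 * e) in Hsmall by (unfold e; field; lra).
      replace (/ (3 * 2 ^ m)) with (/3 * e) in Hrest by (unfold e; field; lra).
      replace (/ (3 * (2 * (2 * 2 ^ m)))) with (/12 * e) by (unfold e; field; lra).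
      replace (t + sumR (l1 ++ l2) - 1/3) with (sumR (l1 ++ l2) - 1/3 - - t) by ring.
      lra.
Qed.

Lemma sec_traj_const_third k : sec_traj const_third k = INR k / 3.
Proof.
  induction k as [|k IH]; unfold sec_traj in *; [simpl; lra|].
  rewrite S_INR. simpl. destruct (sec_run const_third k) as [st ac].
  simpl in *. rewrite last_last. unfold f_add, const_third. rewrite IH. lra.
Qed.

Lemma prim_traj_succ pih ell x j : valid_prim_policy pih ->
  exists u, binary_action u /\ prim_traj pih ell x (S j) = prim_traj pih ell x j + u.
Proof.
  intros Hv. unfold prim_traj. simpl. destruct (prim_run pih ell x j) as [st ac].
  simpl. eexists. split; [apply Hv|]. rewrite last_last. reflexivity.
Qed.

Lemma prim_traj_add pih ell x a d : valid_prim_policy pih ->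
  exists l, length l = d /\ Forall binary_action l /\
    prim_traj pih ell x (a + d) = prim_traj pih ell x a + sumR l.
Proof.
  intros Hv. induction d as [|d (l & Hl & Hbin & HE)].
  - exists []. rewrite Nat.add_0_r. unfold sumR; simpl. repeat split; [constructor | ring].
  - destruct (prim_traj_succ pih ell x (a + d) Hv) as (u & Hu & Hs).
    exists (u :: l). rewrite Nat.add_succ_r, Hs, HE. unfold sumR; simpl.
    repeat split; [lia | constructor; assumption | ring].
Qed.

Lemma sqz_cond_unique x q q' : sqz_cond x q -> sqz_cond x q' -> q = q'.
Proof.
  assert (Htol : forall q, (1 <= q)%nat -> 1 / (4 * 2 ^ q) <= 1/8).
  { intros p Hp. assert (2 <= 2 ^ p) by (rewrite <- (pow_1 2) at 1; apply Rle_pow; [lra|lia]).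
    apply Rmult_le_compat_l; [lra|]. apply Rinv_le_contravar; lra. }
  intros [Hq [H1 H2]] [Hq' [H1' H2']].
  pose proof (Htol q Hq). pose proof (Htol q' Hq').
  destruct (Nat.lt_total q q') as [Hlt|[Heq|Hlt]]; [exfalso| exact Heq |exfalso];
    apply le_INR in Hlt; rewrite S_INR in Hlt; lra.
Qed.

Lemma h_sqz_Some x q : h_sqz x = Some q -> sqz_cond x q.
Proof.
  unfold h_sqz. destruct excluded_middle_informative; [|discriminate].
  intros [= <-]. apply proj2_sig.
Qed.

Lemma h_sqz_sqz_cond x q : sqz_cond x q -> h_sqz x = Some q.
Proof.
  intros Hq. unfold h_sqz. destruct excluded_middle_informative as [H|H].
  - f_equal. apply (sqz_cond_unique x); [apply proj2_sig | exact Hq].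
  - exfalso. eauto.
Qed.

Lemma sqz_cond_third k : (1 <= k)%nat -> sqz_cond (INR k / 3) k.
Proof.
  intros Hk. pose proof (pow2_pos k).
  assert (0 < 1 / (4 * 2 ^ k)) by (apply Rdiv_lt_0_compat; lra).
  repeat split; [exact Hk | lra | lra].
Qed.

Lemma illusion_tracks_thirds pih ell z k :
  illusion_witness pih ell z -> valid_sec_policy const_third -> (1 <= k)%nat ->
  Rabs (prim_traj pih ell (sec_traj const_third) (z k) - INR k / 3) <= 1 / (4 * 2 ^ k).
Proof.
  intros (_ & _ & Hw) Hc Hk.
  specialize (Hw const_third Hc k).
  rewrite sec_traj_const_third, (h_sqz_sqz_cond _ _ (sqz_cond_third k Hk)) in Hw.
  destruct (h_sqz_Some _ _ (eq_sym Hw)) as [_ H]. apply Rabs_le, H.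
Qed.

Lemma max_gap_ge z N k : (1 <= k <= N)%nat -> (z (S k) - z k <= max_gap z N)%nat.
Proof.
  intros Hk. unfold max_gap.
  assert (Hin : In (z (S k) - z k)%nat (map (fun k => (z (S k) - z k)%nat) (seq 1 N))).
  { apply in_map_iff. exists k. split; [reflexivity|]. apply in_seq. lia. }
  revert Hin. generalize (map (fun k => (z (S k) - z k)%nat) (seq 1 N)).
  induction l as [|a l IH]; simpl; [tauto|]. intros [<-|H]; [|specialize (IH H)]; lia.
Qed.

Lemma illusion_step_near_third pih ell z k :
  illusion_witness pih ell z -> valid_sec_policy const_third -> (1 <= k)%nat ->
  exists l, length l = (z (S k) - z k)%nat /\ Forall binary_action l /\
    Rabs (sumR l - 1/3) <= 3 / (8 * 2 ^ k).
Proof.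
  intros Hwit Hc Hk. pose proof Hwit as (Hv & Hz & _).
  set (P := prim_traj pih ell (sec_traj const_third)).
  destruct (prim_traj_add pih ell (sec_traj const_third) (z k) (z (S k) - z k) Hv)
    as (l & Hlen & Hbin & Hsum).
  replace (z k + (z (S k) - z k))%nat with (z (S k)) in Hsum by (specialize (Hz k (S k)); lia).
  exists l. split; [exact Hlen|]. split; [exact Hbin|].
  pose proof (illusion_tracks_thirds pih ell z k Hwit Hc Hk) as Hwin.
  pose proof (illusion_tracks_thirds pih ell z (S k) Hwit Hc ltac:(lia)) as HSwin.
  fold P in Hwin, HSwin, Hsum. rewrite Hsum, S_INR in HSwin.
  pose proof (Rabs_triang (P (z k) + sumR l - (INR k + 1) / 3) (- (P (z k) - INR k / 3))) as Htri.
  rewrite Rabs_Ropp in Htri.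
  replace (P (z k) + sumR l - (INR k + 1) / 3 + - (P (z k) - INR k / 3)) with (sumR l - 1/3)
    in Htri by field.
  pose proof (pow2_pos k). change (2 ^ S k) with (2 * 2 ^ k) in HSwin.
  replace (3 / (8 * 2 ^ k)) with (1 / (4 * (2 * 2 ^ k)) + 1 / (4 * 2 ^ k)) by (field; lra).
  lra.
Qed.

Theorem lemma2 :
  forall (pih : prim_policy) (ell : nat -> nat) (z : nat -> nat),
    illusion_witness pih ell z ->
    valid_sec_policy const_third ->
    forall T : R,
      exists N : nat, (0 < N)%nat /\ T < INR (max_gap z N).
Proof.
  intros pih ell z Hwit Hc T.
  destruct (INR_unbounded T) as [M HM].
  set (k := S (2 * M)).
  exists k. split; [lia|]. apply Rnot_le_lt. intros Hgap.
  destruct (illusion_step_near_third pih ell z k Hwit Hc ltac:(lia)) as (l & Hlen & Hbin & Hnear).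
  assert (Hshort : (length l <= M)%nat).
  { assert (Hk : (z (S k) - z k <= max_gap z k)%nat) by (apply max_gap_ge; lia).
    apply le_INR in Hk. apply INR_le. rewrite Hlen. lra. }
  pose proof (sumR_far_third M l Hshort (Forall_impl _ binary_action_dyadic_or_small Hbin))
    as Hfar.
  assert (Hnarrow : 3 / (8 * 2 ^ k) < / (3 * 2 ^ (2 * M))).
  { change (2 ^ k) with (2 * 2 ^ (2 * M)). pose proof (pow2_pos (2 * M)).
    set (e := 2 ^ (2 * M)) in *.
    replace (3 / (8 * (2 * e))) with (9 / 16 * / (3 * e)) by (field; lra).
    assert (0 < / (3 * e)) by (apply Rinv_0_lt_compat; lra). lra. }
  lra.
Qed.
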